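(* Let $(G,O)$ be an equipped group with $O$ finite. Let $g_1,\dots,g_n\in O$, $a_1,b_1,\dots,a_k,b_k\in G$, $g\in O$, let $h\in\langle g_1,\dots,g_n,a_1,b_1,\dots,a_k,b_k\rangle$, and let $s_{g^{-1}}\in S(G,O)$ satisfy $\alpha(s_{g^{-1}})=g^{-1}$. Then there exists $z\in S(G,O)$ such that, in $\mathbb S(G,O)$, $$x_{g_1}\cdots x_{g_n}\,x_g\,s_{g^{-1}}\,y_{a_1,b_1}\cdots y_{a_k,b_k}=x_{g_1}\cdots x_{g_n}\,x_{g^h}\,z\,y_{a_1,b_1}\cdots y_{a_k,b_k}.$$
   Context: Conventions: $x^y=y^{-1}xy$, $[x,y]=xyx^{-1}y^{-1}$. An equipped group $(G,O)$: $O\subset G$ invariant under conjugation, ${\bf 1}\notin O$. The strong covering semigroup $\mathbb S(G,O)$ is the semigroup generated by $x_g$ ($g\in O$) and $y_{a,b}$ ($a,b\in G$) subject to the relations, for all $g_1,g_2,g\in O$, $a,b\in G$: $x_{g_1}x_{g_2}=x_{g_2}x_{g_1^{g_2}}$; $x_gy_{a,b}=y_{a,b}x_{g^{[a,b]}}$; $x_gy_{a,b}=x_{g^{c_1}}y_{ga,b}$ with $c_1=ab^{-1}a^{-1}g^{-1}$; $y_{a,b}x_g=y_{a,g^{-1}b}x_{g^{c_2}}$ with $c_2=ba^{-1}b^{-1}g$; $x_gy_{a,b}=x_{g^{[a,b]}}y_{a^{g^{[a,b]}},b^{g^{[a,b]}}}$. (In the paper it is defined via the algebraic braid groups and shown to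 have this presentation.) $S(G,O)$ denotes its subsemigroup generated by the $x_g$, $g\in O$ (the factorization semigroup, with relations $x_{g_1}x_{g_2}=x_{g_2}x_{g_1^{g_2}}$), and $\alpha:S(G,O)\to G$ is the homomorphism $x_g\mapsto g$. *)

From Stdlib Require Import List.
Import ListNotations.
Set Implicit Arguments.

Section Defs.
Variable G : Type.
Variables (mul : G -> G -> G) (one : G) (inv : G -> G).

Definition is_group : Prop :=
  (forall x y z, mul x (mul y z) = mul (mul x y) z) /\
  (forall x, mul one x = x) /\ (forall x, mul x one = x) /\
  (forall x, mul (inv x) x = one) /\ (forall x, mul x (inv x) = one).

(* conventions: x^y = y^{-1} x y,  [x,y] = x y x^{-1} y^{-1} *)
Definition conj (x y : G) : G := mul (inv y) (mul x y).
Definition comm (x y : G) : G := mul x (mul y (mul (inv x) (inv y))).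

Inductive in_gen (S : G -> Prop) : G -> Prop :=
| gen_base x : S x -> in_gen S x
| gen_one : in_gen S one
| gen_mul x y : in_gen S x -> in_gen S y -> in_gen S (mul x y)
| gen_inv x : in_gen S x -> in_gen S (inv x).

Definition equipped (O : G -> Prop) : Prop :=
  (forall g h, O g -> O (conj g h)) /\ ~ O one.

Definition finite_set (O : G -> Prop) : Prop :=
  exists l : list G, forall x, O x <-> In x l.

Inductive letter : Type :=
| X : G -> letter
| Y : G -> G -> letter.

Variable O : G -> Prop.

Inductive srel : list letter -> list letter -> Prop :=
| rel1 g1 g2 : O g1 -> O g2 ->
    srel [X g1; X g2] [X g2; X (conj g1 g2)]
| rel2 g a b : O g ->
    srel [X g; Y a b] [Y a b; X (conj g (comm a b))]
| rel3 g a b : O g ->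
    srel [X g; Y a b]
         [X (conj g (mul a (mul (inv b) (mul (inv a) (inv g))))); Y (mul g a) b]
| rel4 g a b : O g ->
    srel [Y a b; X g]
         [Y a (mul (inv g) b); X (conj g (mul b (mul (inv a) (mul (inv b) g))))]
| rel5 g a b : O g ->
    srel [X g; Y a b]
         [X (conj g (comm a b));
          Y (conj a (conj g (comm a b))) (conj b (conj g (comm a b)))].

(* equality of words in SS(G,O): the congruence generated by srel *)
Inductive seq_eq : list letter -> list letter -> Prop :=
| seq_refl w : seq_eq w w
| seq_sym u v : seq_eq u v -> seq_eq v u
| seq_trans u v w : seq_eq u v -> seq_eq v w -> seq_eq u w
| seq_step u v l r : srel l r -> seq_eq (u ++ l ++ v) (u ++ r ++ v).

(* alpha : S(G,O) -> G on words in the x_g *)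
Definition alpha (s : list G) : G := fold_right mul one s.

Definition xword (s : list G) : list letter := map X s.
Definition yword (ab : list (G * G)) : list letter :=
  map (fun p => Y (fst p) (snd p)) ab.

End Defs.

From Stdlib Require Import List Morphisms.
Import ListNotations.
Set Implicit Arguments.

(* Call u in G admissible for a prefix P and a suffix Q if P w Q = P w^u Q in SS(G,O) for
   every x-word w with alpha(w) = 1. Admissible elements form a subgroup.  Each g_i is
   admissible: by relation 1 such a w commutes with every x-word, and
   x_{g_i} w = w x_{g_i} = x_{g_i} w^{g_i}.  For a single y_{a,b}, pushing w through it by
   relation 3, resp. by relations 2 and 4, shows that a b^-1 a^-1 and (ab)^-1 are
   admissible, hence so are a and b; relation 2 carries this past the y's in front of
   y_{a,b}, up to conjugation by the product of their commutators.  So h is admissible,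
   and the theorem is the instance w = g s, z = s^h. *)

Declare Scope group_scope.

Section Covering.
Variable G : Type.
Variables (mul : G -> G -> G) (one : G) (inv : G -> G).
Hypothesis HG : is_group mul one inv.
Variable O : G -> Prop.
Hypothesis HO : equipped mul one inv O.

Local Notation "x * y" := (mul x y) : group_scope.
Local Notation "1" := one : group_scope.
Local Notation "x ^-1" := (inv x) (at level 3, left associativity, format "x ^-1") : group_scope.
Local Notation "x ^ y" := (conj mul inv x y) : group_scope.
Local Notation α := (alpha mul one).
Local Notation "u ≡ v" := (seq_eq mul inv O u v) (at level 70).
Local Open Scope group_scope.

Lemma mulgA x y z : x * y * z = x * (y * z).
Proof. destruct HG as [H _]. now rewrite H. Qed.
Lemma mul1g x : 1 * x = x. Proof. apply HG. Qed.
Lemma mulg1 x : x * 1 = x. Proof. apply HG. Qed.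
Lemma mulVg x : x^-1 * x = 1. Proof. apply HG. Qed.
Lemma mulgV x : x * x^-1 = 1. Proof. apply HG. Qed.

Lemma mulKVg x y : x * (x^-1 * y) = y.
Proof. now rewrite <- mulgA, mulgV, mul1g. Qed.
Lemma mulKg x y : x^-1 * (x * y) = y.
Proof. now rewrite <- mulgA, mulVg, mul1g. Qed.
Lemma invg_unique x y : x * y = 1 -> y = x^-1.
Proof. intros Hxy. now rewrite <- (mulKg x y), Hxy, mulg1. Qed.
Lemma invgK x : x^-1^-1 = x.
Proof. symmetry. apply invg_unique, mulVg. Qed.
Lemma invMg x y : (x * y)^-1 = y^-1 * x^-1.
Proof. symmetry. apply invg_unique. now rewrite mulgA, mulKVg, mulgV. Qed.
Lemma invg1 : 1^-1 = 1.
Proof. symmetry. apply invg_unique, mul1g. Qed.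

Ltac group_norm :=
  repeat progress rewrite ?mulgA, ?mul1g, ?mulg1, ?mulVg, ?mulgV, ?mulKVg, ?mulKg,
    ?invMg, ?invgK, ?invg1.
Ltac group_eq := unfold conj, comm; group_norm; reflexivity.

Lemma conjg1 x : x ^ 1 = x. Proof. group_eq. Qed.
Lemma conjgM x u v : x ^ (u * v) = (x ^ u) ^ v. Proof. group_eq. Qed.

Lemma O_conj x u : O x -> O (x ^ u). Proof. intros. now apply HO. Qed.

Definition conj_word (w : list G) (u : G) : list G := map (fun x => x ^ u) w.

Lemma Forall_conj_word w u : Forall O w -> Forall O (conj_word w u).
Proof. intros Hw. apply Forall_map. eapply Forall_impl; [|exact Hw]. intros x. apply O_conj. Qed.
Lemma conj_word1 w : conj_word w 1 = w.
Proof. rewrite <- map_id. apply map_ext, conjg1. Qed.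
Lemma conj_wordM w u v : conj_word w (u * v) = conj_word (conj_word w u) v.
Proof. unfold conj_word. rewrite map_map. apply map_ext. intro. apply conjgM. Qed.
Lemma conj_word_app w1 w2 u : conj_word (w1 ++ w2) u = conj_word w1 u ++ conj_word w2 u.
Proof. apply map_app. Qed.

Lemma alpha_app w1 w2 : α (w1 ++ w2) = α w1 * α w2.
Proof. induction w1 as [|x w1 IH]; simpl. - now rewrite mul1g. - now rewrite IH, mulgA. Qed.
Lemma alpha_conj_word w u : α (conj_word w u) = (α w) ^ u.
Proof. induction w as [|x w IH]; simpl. - group_eq. - rewrite IH. group_eq. Qed.
Lemma alpha_conj_word1 w u : α w = 1 -> α (conj_word w u) = 1.
Proof. intros Hw. rewrite alpha_conj_word, Hw. group_eq. Qed.

Lemma xword_app (w1 w2 : list G) : xword (w1 ++ w2) = xword w1 ++ xword w2.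
Proof. apply map_app. Qed.
Lemma yword_app (l1 l2 : list (G * G)) : yword (l1 ++ l2) = yword l1 ++ yword l2.
Proof. apply map_app. Qed.

Global Instance seq_eq_equiv : Equivalence (seq_eq mul inv O).
Proof. split; intro; intros; eauto using seq_refl, seq_sym, seq_trans. Qed.

Lemma seq_eq_ctx u v l r : l ≡ r -> u ++ l ++ v ≡ u ++ r ++ v.
Proof.
  induction 1 as [|? ? _ IH|? ? ? _ IH1 _ IH2|u' v' l r Hlr].
  - reflexivity.
  - now symmetry.
  - now transitivity (u ++ v0 ++ v).
  - assert (Hassoc : forall m, u ++ (u' ++ m ++ v') ++ v = (u ++ u') ++ m ++ (v' ++ v))
      by (intros; now rewrite !app_assoc).
    rewrite !Hassoc. now apply seq_step.
Qed.
Lemma seq_eq_catl u l r : l ≡ r -> u ++ l ≡ u ++ r.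
Proof. intros Hlr. rewrite <- (app_nil_r l), <- (app_nil_r r). now apply seq_eq_ctx. Qed.
Lemma seq_eq_catr v l r : l ≡ r -> l ++ v ≡ r ++ v.
Proof. apply (seq_eq_ctx []). Qed.
Lemma srel_cons2 x1 x2 y1 y2 v : srel mul inv O [x1; x2] [y1; y2] ->
  x1 :: x2 :: v ≡ y1 :: y2 :: v.
Proof. intros Hrel. exact (seq_step [] v Hrel). Qed.

Global Instance app_seq_eq_proper :
  Proper (seq_eq mul inv O ==> seq_eq mul inv O ==> seq_eq mul inv O) (@app (letter G)).
Proof.
  intros l l' Hl r r' Hr. transitivity (l' ++ r).
  - now apply seq_eq_catr.
  - now apply seq_eq_catl.
Qed.
Global Instance cons_seq_eq_proper :
  Proper (eq ==> seq_eq mul inv O ==> seq_eq mul inv O) (@cons (letter G)).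
Proof. intros x ? <- l l' Hl. now apply (seq_eq_catl [x]). Qed.

Lemma X_xword c t : O c -> Forall O t -> X c :: xword t ≡ xword t ++ [X (c ^ α t)].
Proof.
  intros Hc Ht. revert c Hc. induction Ht as [|t0 t Ht0 Ht IH]; intros c Hc; simpl.
  - now rewrite conjg1.
  - transitivity (X t0 :: X (c ^ t0) :: xword t).
    + apply srel_cons2. now constructor.
    + rewrite IH, conjgM by auto using O_conj. reflexivity.
Qed.

Lemma xword_X_conj c t : O c -> Forall O t -> xword t ++ [X c] ≡ X c :: xword (conj_word t c).
Proof.
  intros Hc Ht. induction Ht as [|t0 t Ht0 Ht IH]; simpl.
  - reflexivity.
  - rewrite IH. apply srel_cons2. now constructor.
Qed.

Lemma xword_X d t : O d -> Forall O t -> xword t ++ [X d] ≡ X (d ^ (α t)^-1) :: xword t.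
Proof.
  intros Hd Ht. rewrite X_xword by auto using O_conj.
  rewrite <- conjgM, mulVg, conjg1. reflexivity.
Qed.

Lemma xword_central t w : Forall O t -> Forall O w -> α w = 1 ->
  xword t ++ xword w ≡ xword w ++ xword t.
Proof.
  intros Ht Hw Hw1. induction Ht as [|t0 t Ht0 Ht IH]; simpl.
  - now rewrite app_nil_r.
  - rewrite IH, app_comm_cons, X_xword, Hw1, conjg1, <- app_assoc by auto. reflexivity.
Qed.

Lemma xword_Y_comm a b w : Forall O w ->
  xword w ++ [Y a b] ≡ Y a b :: xword (conj_word w (comm mul inv a b)).
Proof.
  intros Hw. induction Hw as [|x w Hx Hw IH]; simpl.
  - reflexivity.
  - rewrite IH. apply srel_cons2. now constructor.
Qed.

Definition comm_prod (l : list (G * G)) : G :=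
  fold_right (fun p k => comm mul inv (fst p) (snd p) * k) 1 l.

Lemma xword_yword l w : Forall O w ->
  xword w ++ yword l ≡ yword l ++ xword (conj_word w (comm_prod l)).
Proof.
  revert w. induction l as [|[a b] l IH]; intros w Hw; simpl.
  - now rewrite conj_word1, app_nil_r.
  - change (Y a b :: yword l) with ([Y a b] ++ yword l).
    rewrite app_assoc, xword_Y_comm, <- app_comm_cons, IH by auto using Forall_conj_word.
    now rewrite conj_wordM.
Qed.

(* Relation 3 reads x_h y_{c,b} = x_{h^E} y_{hc,b} with E = (b^-1)^((hc)^-1): the
   conjugator depends only on the new first index, so the whole word ends up conjugated
   by the one belonging to the final index (alpha t) a. *)
Lemma xword_Y_rel3 a b t : Forall O t ->
  xword t ++ [Y a b] ≡ xword (conj_word t ((b^-1) ^ (α t * a)^-1)) ++ [Y (α t * a) b].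
Proof.
  revert a. induction t as [|h t IH] using rev_ind; intros a Ht; simpl.
  - now rewrite mul1g.
  - apply Forall_app in Ht as [Ht Hh]. inversion_clear Hh as [|? ? Hh' _].
    transitivity ((xword t ++ [X (h ^ (a * (b^-1 * (a^-1 * h^-1))))]) ++ [Y (h * a) b]).
    { unfold xword. rewrite map_app, <- !app_assoc. simpl.
      apply seq_eq_catl, srel_cons2. now constructor. }
    rewrite xword_X, <- app_comm_cons, IH by auto using O_conj.
    rewrite app_comm_cons, X_xword by auto using O_conj, Forall_conj_word.
    rewrite alpha_app, conj_word_app, alpha_conj_word. unfold xword.
    rewrite !map_app, <- !app_assoc. simpl.
    group_eq.
Qed.

(* Likewise relation 4 reads y_{a,c} x_h = y_{a,h^-1 c} x_{h^D} with D = (a^-1)^((h^-1 c)^-1). *)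
Lemma Y_xword_rel4 a b t : Forall O t ->
  Y a b :: xword t ≡ Y a ((α t)^-1 * b) :: xword (conj_word t ((a^-1) ^ ((α t)^-1 * b)^-1)).
Proof.
  intros Ht. revert b. induction Ht as [|h t Hh Ht IH]; intros b; simpl.
  - now rewrite invg1, mul1g.
  - transitivity (Y a (h^-1 * b) :: X (h ^ (b * (a^-1 * (b^-1 * h)))) :: xword t).
    { apply srel_cons2. now constructor. }
    rewrite X_xword by auto using O_conj.
    rewrite app_comm_cons, IH, <- app_comm_cons, xword_X by auto using O_conj, Forall_conj_word.
    rewrite alpha_conj_word. group_eq.
Qed.

Definition admissible (P Q : list (letter G)) (u : G) : Prop :=
  forall w, Forall O w -> α w = 1 -> P ++ xword w ++ Q ≡ P ++ xword (conj_word w u) ++ Q.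

Lemma admissible1 P Q : admissible P Q 1.
Proof. intros w _ _. now rewrite conj_word1. Qed.

Lemma admissibleM P Q u v : admissible P Q u -> admissible P Q v -> admissible P Q (u * v).
Proof.
  intros Hu Hv w Hw Hw1. rewrite conj_wordM, Hu by auto.
  apply Hv; auto using Forall_conj_word, alpha_conj_word1.
Qed.

Lemma admissibleV P Q u : admissible P Q u -> admissible P Q u^-1.
Proof.
  intros Hu w Hw Hw1. rewrite (Hu (conj_word w u^-1)) by auto using Forall_conj_word, alpha_conj_word1.
  now rewrite <- conj_wordM, mulVg, conj_word1.
Qed.

Lemma admissible_gen P Q (S : G -> Prop) u : (forall x, S x -> admissible P Q x) ->
  in_gen mul one inv S u -> admissible P Q u.
Proof.
  intros HS. induction 1; auto using admissible1, admissibleM, admissibleV.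
Qed.

Lemma admissible_rel3 a b : admissible [] [Y a b] ((b^-1) ^ a^-1).
Proof.
  intros w Hw Hw1. simpl. now rewrite xword_Y_rel3, Hw1, mul1g.
Qed.

Lemma admissible_rel4 a b :
  admissible [] [Y a b] (((a^-1) ^ b^-1) ^ (comm mul inv a b)^-1).
Proof.
  intros w Hw Hw1. simpl.
  rewrite !xword_Y_comm, Y_xword_rel4 by auto using Forall_conj_word.
  rewrite alpha_conj_word1, invg1, mul1g, <- !conj_wordM by auto.
  group_eq.
Qed.

Lemma admissible_eq P Q u v : admissible P Q u -> u = v -> admissible P Q v.
Proof. now intros ? <-. Qed.

Lemma admissible_conj P Q u v : admissible P Q u -> admissible P Q v -> admissible P Q (u ^ v).
Proof. intros Hu Hv. unfold conj. auto using admissibleM, admissibleV. Qed.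

Lemma admissible_Y a b : admissible [] [Y a b] a /\ admissible [] [Y a b] b.
Proof.
  pose proof (admissible_rel3 a b) as HE.
  assert (Hab : admissible [] [Y a b] (a * b)^-1).
  { eapply admissible_eq; [apply (admissibleM HE (admissible_rel4 a b))|group_eq]. }
  assert (Ha : admissible [] [Y a b] a).
  { eapply admissible_eq; [apply (admissibleM HE (admissibleV Hab))|group_eq]. }
  split; [exact Ha|].
  eapply admissible_eq; [apply (admissibleM (admissibleV Ha) (admissibleV Hab))|group_eq].
Qed.

Lemma admissible_yword_lift P l1 l2 a b u : admissible [] [Y a b] u ->
  admissible P (yword (l1 ++ (a, b) :: l2)) (u ^ (comm_prod l1)^-1).
Proof.
  intros Hu w Hw Hw1. set (k := comm_prod l1).
  assert (Hmove : forall v, Forall O v ->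
    P ++ xword v ++ yword (l1 ++ (a, b) :: l2)
    ≡ P ++ yword l1 ++ (xword (conj_word v k) ++ [Y a b]) ++ yword l2).
  { intros v Hv. rewrite yword_app, (app_assoc (xword v)), xword_yword by auto.
    now rewrite <- !app_assoc. }
  rewrite !Hmove by auto using Forall_conj_word.
  pose proof (Hu (conj_word w k)) as Hwk. simpl in Hwk.
  rewrite Hwk by auto using Forall_conj_word, alpha_conj_word1.
  rewrite <- !conj_wordM. group_eq.
Qed.

Lemma admissible_prefix gs Q c : Forall O gs -> In c gs -> admissible (xword gs) Q c.
Proof.
  intros Hgs Hc w Hw Hw1. destruct (in_split c gs Hc) as (l1 & l2 & ->).
  apply Forall_app in Hgs as [_ Hcl2]. inversion_clear Hcl2 as [|? ? Hc' Hl2].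
  rewrite xword_app, <- !app_assoc. apply seq_eq_catl. simpl.
  assert (Hswap : forall v, Forall O v -> α v = 1 ->
    xword l2 ++ xword v ++ Q ≡ xword v ++ xword l2 ++ Q).
  { intros v Hv Hv1. now rewrite app_assoc, xword_central, <- app_assoc. }
  rewrite (Hswap w), (Hswap (conj_word w c)) by auto using Forall_conj_word, alpha_conj_word1.
  rewrite !app_comm_cons, X_xword, Hw1, conjg1, xword_X_conj by auto.
  reflexivity.
Qed.

Lemma admissible_comm_prod P Q l :
  (forall p, In p l -> admissible P Q (fst p) /\ admissible P Q (snd p)) ->
  admissible P Q (comm_prod l).
Proof.
  induction l as [|[a b] l IH]; intros Hl; simpl.
  - apply admissible1.
  - destruct (Hl (a, b)) as [Ha Hb]; [now left|].
    apply admissibleM; [unfold comm; auto using admissibleM, admissibleV|].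
    apply IH. intros p Hp. apply Hl. now right.
Qed.

Lemma admissible_yword P l p : In p l ->
  admissible P (yword l) (fst p) /\ admissible P (yword l) (snd p).
Proof.
  assert (Hprefix : forall l1 l2, l = l1 ++ l2 -> forall p, In p l1 ->
    admissible P (yword l) (fst p) /\ admissible P (yword l) (snd p)).
  { intros l1. induction l1 as [|[a b] l1 IH] using rev_ind; intros l2 Hl q Hq; [destruct Hq|].
    rewrite <- app_assoc in Hl. simpl in Hl.
    apply in_app_or in Hq as [Hq|[<-|[]]]; [exact (IH _ Hl q Hq)|].
    pose proof (admissible_comm_prod _ (IH _ Hl)) as Hk.
    destruct (admissible_Y a b) as [Ha Hb]. subst l. simpl.
    split; eapply admissible_eq.
    - exact (admissible_conj (admissible_yword_lift P l1 l2 Ha) Hk).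
    - group_eq.
    - exact (admissible_conj (admissible_yword_lift P l1 l2 Hb) Hk).
    - group_eq. }
  intros Hp. exact (Hprefix l [] (eq_sym (app_nil_r l)) p Hp).
Qed.

End Covering.

Theorem proposition4
  (G : Type) (mul : G -> G -> G) (one : G) (inv : G -> G)
  (HG : is_group mul one inv)
  (O : G -> Prop) (HO : equipped mul one inv O) (Ofin : finite_set O)
  (gs : list G) (Hgs : forall x, In x gs -> O x)
  (ab : list (G * G))
  (g : G) (Hg : O g)
  (h : G)
  (Hh : in_gen mul one inv
          (fun x => In x gs \/ exists p, In p ab /\ (x = fst p \/ x = snd p)) h)
  (s : list G) (Hs : forall x, In x s -> O x) (Hsa : alpha mul one s = inv g) :
  exists z : list G, (forall x, In x z -> O x) /\
    seq_eq mul inv O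
      (xword gs ++ [X g] ++ xword s ++ yword ab)
      (xword gs ++ [X (conj mul inv g h)] ++ xword z ++ yword ab).
Proof.
  apply Forall_forall in Hgs, Hs.
  assert (Hadm : admissible mul one inv O (xword gs) (yword ab) h).
  { refine (admissible_gen HG HO _ Hh). intros x [Hx|(p & Hp & [-> | ->])].
    - exact (admissible_prefix HG HO _ _ Hgs Hx).
    - apply (admissible_yword HG HO _ _ _ Hp).
    - apply (admissible_yword HG HO _ _ _ Hp). }
  exists (conj_word mul inv s h). split.
  - apply Forall_forall, (Forall_conj_word HO), Hs.
  - apply (Hadm (g :: s)); [now constructor|].
    change (mul g (alpha mul one s) = one). rewrite Hsa. apply HG.
Qed.
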